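(* Let $\mathcal{F}_{z}(\theta)$, indexed by data points $z$, be a family of loss functions of parameters $\theta=(W;g)$, where $W=\{w^{(1)},\dots,w^{(m)}\}$ is a collection of vectors and $g$ collects the remaining parameters. Assume each $\mathcal{F}_z$ is continuously differentiable at every $\theta$ for which no $w^{(j)}$ is $0$, and that every $w^{(i)}$ is scale-invariant for every $\mathcal{F}_z$, i.e. $\mathcal{F}_z(\dots,c\,w^{(i)},\dots)=\mathcal{F}_z(\dots,w^{(i)},\dots)$ for all $c>0$. Consider stochastic gradient descent with learning rates $\eta_{\mathrm{w},t},\eta_{\mathrm{g},t}>0$ and data points $z_0,z_1,\dots$: $$w^{(i)}_{t+1}=w^{(i)}_t-\eta_{\mathrm{w},t}\nabla_{w^{(i)}_t}\mathcal{F}_{z_t}(\theta_t)\quad(i=1,\dots,m),\qquad g_{t+1}=g_t-\eta_{\mathrm{g},t}\nabla_{g_t}\mathcal{F}_{z_t}(\theta_t),$$ started from $\theta_0$ with all $w^{(i)}_0\neq 0$. Let $v^{(i)}_t=w^{(i)}_t/\|w^{(i)}_t\|_2$, $V_t=\{v^{(1)}_t,\dots,v^{(m)}_t\}$, $\tilde\theta_t=(V_t;g_t)$ and $G^{(i)}_t=\|w^{(i)}_t\|_2^2$. Then for all $t\ge0$ and all $i$, $$v^{(i)}_{t+1}=\Pi\!\left(v^{(i)}_t-\frac{\eta_{\mathrm{w},t}}{G^{(i)}_t}\nabla_{v^{(i)}_t}\mathcal{F}_{z_t}(\tilde\theta_t)\right),\qquad G^{(i)}_{t+1}=G^{(i)}_t+\frac{\eta_{\mathrm{w},t}^2}{G^{(i)}_t}\|\nabla_{v^{(i)}_t}\mathcal{F}_{z_t}(\tilde\theta_t)\|_2^2,$$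 where $\Pi(w)=w/\|w\|_2$ and $\nabla_{v^{(i)}_t}\mathcal{F}_{z_t}(\tilde\theta_t)$ denotes the gradient of $\mathcal{F}_{z_t}$ with respect to its $i$-th block $w^{(i)}$, evaluated at the point $(V_t;g_t)$.
   Context: Scale-invariance: a parameter block $w$ of a loss $\mathcal{F}(w,\theta')$ is scale-invariant if $\mathcal{F}(w,\theta')=\mathcal{F}(cw,\theta')$ for all $c>0$. *)

From mathcomp Require Import all_boot all_order all_algebra.
From mathcomp Require Import all_classical all_reals all_analysis.
Set Implicit Arguments. Unset Strict Implicit. Unset Printing Implicit Defensive.
Import Order.TTheory GRing.Theory Num.Theory.
Import numFieldNormedType.Exports.
Local Open Scope ring_scope.

(* Parameter vector theta = (W; g) is encoded as a row vector in R^n.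
   blk : 'I_n -> option 'I_m assigns each coordinate either to the block
   w^(i) (Some i) or to the remaining parameters g (None). *)

Definition sqnorm (R : realType) (n : nat) (x : 'rV[R]_n) : R :=
  \sum_(j < n) x ord0 j ^+ 2.

Definition projS (R : realType) (n : nat) (x : 'rV[R]_n) : 'rV[R]_n :=
  (Num.sqrt (sqnorm x))^-1 *: x.

Definition blk_vec (R : realType) (n m : nat) (blk : 'I_n -> option 'I_m)
  (i : 'I_m) (x : 'rV[R]_n) : 'rV[R]_n :=
  \row_j (if blk j == Some i then x ord0 j else 0).

Definition blk_sqnorm (R : realType) (n m : nat) (blk : 'I_n -> option 'I_m)
  (i : 'I_m) (x : 'rV[R]_n) : R := sqnorm (blk_vec blk i x).

Definition blk_scale (R : realType) (n m : nat) (blk : 'I_n -> option 'I_m)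
  (i : 'I_m) (c : R) (x : 'rV[R]_n) : 'rV[R]_n :=
  \row_j (if blk j == Some i then c * x ord0 j else x ord0 j).

Definition normalize (R : realType) (n m : nat) (blk : 'I_n -> option 'I_m)
  (x : 'rV[R]_n) : 'rV[R]_n :=
  \row_j (match blk j with
          | Some i => x ord0 j / Num.sqrt (blk_sqnorm blk i x)
          | None => x ord0 j
          end).

Definition grad (R : realType) (n : nat) (f : 'rV[R]_n -> R) (x : 'rV[R]_n)
  : 'rV[R]_n := \row_j ('D_(delta_mx ord0 j) f x).

Definition C1_at (R : realType) (n : nat) (f : 'rV[R]_n -> R) (x : 'rV[R]_n)
  : Prop :=
  (\forall y \near x, differentiable f y) /\
  (forall v : 'rV[R]_n, {for x, continuous (fun y => 'D_v f y)}).

From mathcomp Require Import all_boot all_order all_algebra.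
From mathcomp Require Import all_classical all_reals all_analysis.
From mathcomp Require Import ring lra.
Set Implicit Arguments. Unset Strict Implicit. Unset Printing Implicit Defensive.
Import Order.TTheory GRing.Theory Num.Theory.
Import numFieldNormedType.Exports.
Local Open Scope ring_scope.

(* Scale invariance of F_z in the block w^(i) constrains its block gradient in
   two ways.  Differentiating c |-> F_z(.., c w^(i), ..) at c = 1 shows that it
   is orthogonal to w^(i); comparing difference quotients shows that it is
   homogeneous of degree -1, so at (V; g) it is ||w^(i)|| times its value at
   (W; g).  By orthogonality the SGD step w - eta grad is a Pythagorean step,
   which gives the recursion for G and keeps every block nonzero; by
   homogeneity the step equals ||w|| (v - eta/G grad_v), and Pi discards the
   positive factor. *)

Section SquaredNorm.
Variables (R : realType) (n : nat).
Implicit Types (a : R) (x y : 'rV[R]_n).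

Lemma sqnorm_ge0 x : 0 <= sqnorm x.
Proof. by apply: sumr_ge0 => j _; rewrite sqr_ge0. Qed.

Lemma sqnorm_gt0 x : (0 < sqnorm x) = (x != 0).
Proof.
apply/idP/idP => [|x_neq0].
  apply: contraTneq => ->.
  by rewrite /sqnorm big1 ?ltxx // => j _; rewrite mxE expr0n.
rewrite lt_def sqnorm_ge0 andbT; apply: contra x_neq0 => /eqP x0.
apply/eqP/rowP => j; rewrite mxE.
have /eqP := psumr_eq0P (fun k _ => sqr_ge0 (x ord0 k)) x0 (i := j) isT.
by rewrite sqrf_eq0 => /eqP.
Qed.

Lemma sqnormZ a x : sqnorm (a *: x) = a ^+ 2 * sqnorm x.
Proof. by rewrite /sqnorm mulr_sumr; apply: eq_bigr => j _; rewrite mxE exprMn. Qed.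

Lemma sqnormBZ_orth a x y : \sum_j x ord0 j * y ord0 j = 0 ->
  sqnorm (x - a *: y) = sqnorm x + a ^+ 2 * sqnorm y.
Proof.
move=> xy0; rewrite /sqnorm mulr_sumr.
transitivity (\sum_j (x ord0 j ^+ 2 + a ^+ 2 * y ord0 j ^+ 2)
              - (a *+ 2) * \sum_j x ord0 j * y ord0 j).
  rewrite mulr_sumr -sumrB; apply: eq_bigr => j _; rewrite !mxE; ring.
by rewrite xy0 mulr0 subr0 big_split.
Qed.

Lemma projSZ a x : 0 < a -> projS (a *: x) = projS x.
Proof.
move=> a_gt0; rewrite /projS sqnormZ sqrtrM ?sqr_ge0 // sqrtr_sqr gtr0_norm //.
by rewrite scalerA invfM mulrAC mulVf ?gt_eqF // mul1r.
Qed.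

End SquaredNorm.

Section Blocks.
Variables (R : realType) (n m : nat) (blk : 'I_n -> option 'I_m).
Implicit Types (x : 'rV[R]_n) (i : 'I_m).

Definition blocks_scale (c : 'I_m -> R) x : 'rV[R]_n :=
  \row_j (if blk j is Some i then x ord0 j * c i else x ord0 j).

Lemma normalize_blocks_scale x :
  normalize blk x = blocks_scale (fun i => (Num.sqrt (blk_sqnorm blk i x))^-1) x.
Proof. by []. Qed.

Lemma blk_vec_normalize i x :
  blk_vec blk i (normalize blk x) = projS (blk_vec blk i x).
Proof.
apply/rowP => j; rewrite !mxE; case: eqP => [->|_]; last by rewrite mulr0.
by rewrite mulrC.
Qed.

End Blocks.

Section ScaleInvariance.
Variables (R : realType) (n m : nat) (blk : 'I_n -> option 'I_m).
Variable F : 'rV[R]_n -> R.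
Hypothesis F_blk_scale : forall i c x, 0 < c -> F (blk_scale blk i c x) = F x.

Lemma F_blocks_scale (c : 'I_m -> R) x :
  (forall i, 0 < c i) -> F (blocks_scale blk c x) = F x.
Proof.
move=> c_gt0.
pose c_lt k (i : 'I_m) := if (i < k)%N then c i else 1.
suff F_c_lt k : (k <= m)%N -> F (blocks_scale blk (c_lt k) x) = F x.
  rewrite -[RHS](F_c_lt m (leqnn m)); congr F; apply/rowP => j; rewrite !mxE.
  by case: (blk j) => // i; rewrite /c_lt ltn_ord.
elim: k => [|k IHk] k_lt_m.
  congr F; apply/rowP => j; rewrite !mxE.
  by case: (blk j) => // i; rewrite /c_lt ltn0 mulr1.
pose ik : 'I_m := Ordinal k_lt_m.
rewrite -(IHk (ltnW k_lt_m)).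
rewrite -(@F_blk_scale ik _ (blocks_scale blk (c_lt k) x) (c_gt0 ik)).
congr F; apply/rowP => j; rewrite !mxE.
case: (blk j) => // i; rewrite /c_lt ltnS leq_eqVlt.
case: (eqVneq i ik) => [->|i_neq_k] /=.
  by rewrite !eqxx /= ltnn mulr1 mulrC.
have /negbTE -> : nat_of_ord i != k.
  by apply: contra i_neq_k => /eqP i_eq_k; apply/eqP/val_inj.
by rewrite -[Some i == _]/(i == ik) (negbTE i_neq_k).
Qed.

Lemma derive_blk_vec_eq0 i x : 'D_(blk_vec blk i x) F x = 0.
Proof.
rewrite /derive; apply: norm_lim_near_cst.
near=> h.
have h_gt_m1 : 0 < 1 + h.
  have : `|h| < 1 by near: h; apply: dnbhs0_lt.
  by rewrite ltr_norml => /andP[? _]; lra.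
rewrite /=; have -> : h *: blk_vec blk i x + x = blk_scale blk i (1 + h) x.
  by apply/rowP => j; rewrite !mxE; case: ifP => _; rewrite ?mulr0; ring.
by rewrite F_blk_scale // subrr scaler0.
Unshelve. all: by end_near.
Qed.

Lemma blk_vec_grad_orth i x : differentiable F x ->
  \sum_j blk_vec blk i x ord0 j * blk_vec blk i (grad F x) ord0 j = 0.
Proof.
move=> dF; rewrite -[RHS](derive_blk_vec_eq0 i x) deriveE //.
rewrite {2}(row_sum_delta (blk_vec blk i x)) linear_sum; apply: eq_bigr => j _.
rewrite linearZ /= -deriveE // !mxE.
by case: ifP => _; rewrite ?mul0r ?scale0r.
Qed.

Lemma grad_blocks_scale (c : 'I_m -> R) x i j :
  (forall k, 0 < c k) -> differentiable F x -> blk j = Some i ->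
  grad F (blocks_scale blk c x) ord0 j = (c i)^-1 * grad F x ord0 j.
Proof.
move=> c_gt0 dF blk_j; rewrite !mxE.
have ci_neq0 : c i != 0 by rewrite gt_eqF.
suff -> : 'D_(delta_mx ord0 j) F (blocks_scale blk c x)
          = 'D_((c i)^-1 *: delta_mx ord0 j) F x.
  by rewrite deriveE // linearZ /= -deriveE.
rewrite /derive; suff -> : (fun h : R =>
      h^-1 *: (F (h *: delta_mx ord0 j + blocks_scale blk c x) - F (blocks_scale blk c x)))
    = (fun h => h^-1 *: (F (h *: ((c i)^-1 *: delta_mx ord0 j) + x) - F x)) by [].
apply/funext => h.
rewrite F_blocks_scale // -[F (_ + x)](F_blocks_scale _ c_gt0).
congr (_ *: (F _ - _)); apply/rowP => k; rewrite !mxE.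
case: (eqVneq k j) => [->|k_neq_j]; first by rewrite blk_j eqxx /=; field.
by case: (blk k) => * /=; rewrite ?eqxx /=; ring.
Qed.

Lemma blk_vec_grad_normalize i x :
  (forall k, blk_vec blk k x != 0) -> differentiable F x ->
  blk_vec blk i (grad F (normalize blk x))
  = Num.sqrt (blk_sqnorm blk i x) *: blk_vec blk i (grad F x).
Proof.
move=> x_neq0 dF; apply/rowP => j; rewrite !mxE.
case: eqP => [blk_j|_]; last by rewrite mulr0.
have inv_sqrt_gt0 k : 0 < (Num.sqrt (blk_sqnorm blk k x))^-1.
  by rewrite invr_gt0 sqrtr_gt0 sqnorm_gt0.
have := grad_blocks_scale inv_sqrt_gt0 dF blk_j.
by rewrite -normalize_blocks_scale !mxE invrK.
Qed.

End ScaleInvariance.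

Lemma C1_at_differentiable (R : realType) (n : nat) (f : 'rV[R]_n -> R) x :
  C1_at f x -> differentiable f x.
Proof. by case=> /nbhs_singleton. Qed.

Section BlockSGD.
Variables (R : realType) (n m : nat) (blk : 'I_n -> option 'I_m).
Variables (Z : Type) (F : Z -> 'rV[R]_n -> R).
Hypothesis F_differentiable : forall z x,
  (forall i, blk_vec blk i x != 0) -> differentiable (F z) x.
Hypothesis F_blk_scale : forall z i c x,
  0 < c -> F z (blk_scale blk i c x) = F z x.
Variables (eta_w eta_g : nat -> R) (zs : nat -> Z) (theta : nat -> 'rV[R]_n).
Hypothesis sgd_step : forall t j,
  theta t.+1 ord0 j = theta t ord0 j
    - (if blk j is Some _ then eta_w t else eta_g t)
      * grad (F (zs t)) (theta t) ord0 j.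
Hypothesis theta0_neq0 : forall i, blk_vec blk i (theta 0) != 0.

Lemma blk_vec_sgd t i :
  blk_vec blk i (theta t.+1)
  = blk_vec blk i (theta t) - eta_w t *: blk_vec blk i (grad (F (zs t)) (theta t)).
Proof.
apply/rowP => j; rewrite !mxE sgd_step.
by case: eqP => [->|_]; rewrite ?mxE; ring.
Qed.

Lemma blk_sqnorm_sgd t i : (forall k, blk_vec blk k (theta t) != 0) ->
  blk_sqnorm blk i (theta t.+1)
  = blk_sqnorm blk i (theta t)
    + eta_w t ^+ 2 * sqnorm (blk_vec blk i (grad (F (zs t)) (theta t))).
Proof.
move=> theta_neq0; rewrite /blk_sqnorm blk_vec_sgd sqnormBZ_orth //.
exact/(blk_vec_grad_orth (F_blk_scale (zs t)))/F_differentiable.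
Qed.

Lemma sgd_blk_vec_neq0 t i : blk_vec blk i (theta t) != 0.
Proof.
elim: t i => [|t IHt] i; first exact: theta0_neq0.
rewrite -sqnorm_gt0 -/(blk_sqnorm blk i _) blk_sqnorm_sgd //.
by rewrite ltr_wpDr ?(mulr_ge0 (sqr_ge0 _) (sqnorm_ge0 _)) // sqnorm_gt0.
Qed.

End BlockSGD.

Theorem theorem2p5 (R : realType) (n m : nat) (blk : 'I_n -> option 'I_m)
  (Z : Type) (F : Z -> 'rV[R]_n -> R)
  (HC1 : forall (z : Z) (x : 'rV[R]_n),
      (forall i : 'I_m, blk_vec blk i x != 0) -> C1_at (F z) x)
  (Hscale : forall (z : Z) (i : 'I_m) (c : R) (x : 'rV[R]_n),
      0 < c -> F z (blk_scale blk i c x) = F z x)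
  (eta_w eta_g : nat -> R)
  (Hw : forall t, 0 < eta_w t) (Hg : forall t, 0 < eta_g t)
  (zs : nat -> Z) (theta : nat -> 'rV[R]_n)
  (Hsgd : forall (t : nat) (j : 'I_n),
      theta t.+1 ord0 j =
        theta t ord0 j
        - (if blk j is Some _ then eta_w t else eta_g t)
          * grad (F (zs t)) (theta t) ord0 j)
  (H0 : forall i : 'I_m, blk_vec blk i (theta 0%N) != 0) :
  forall (t : nat) (i : 'I_m),
    let G := blk_sqnorm blk i (theta t) in
    let gv := blk_vec blk i (grad (F (zs t)) (normalize blk (theta t))) in
    blk_vec blk i (normalize blk (theta t.+1)) =
      projS (blk_vec blk i (normalize blk (theta t)) - (eta_w t / G) *: gv)
    /\ blk_sqnorm blk i (theta t.+1) = G + eta_w t ^+ 2 / G * sqnorm gv.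
Proof.
have F_diff z x (x_neq0 : forall i, blk_vec blk i x != 0) : differentiable (F z) x.
  exact/C1_at_differentiable/HC1.
move=> t i G gv.
have theta_neq0 := sgd_blk_vec_neq0 F_diff Hscale Hsgd H0 t.
have G_gt0 : 0 < G by rewrite sqnorm_gt0.
have sqrtG_gt0 : 0 < Num.sqrt G by rewrite sqrtr_gt0.
have sqr_sqrtG : Num.sqrt G ^+ 2 = G by rewrite sqr_sqrtr // ltW.
set w := blk_vec blk i (theta t).
set g := blk_vec blk i (grad (F (zs t)) (theta t)).
have gvE : gv = Num.sqrt G *: g.
  exact: (blk_vec_grad_normalize (Hscale (zs t)) i theta_neq0 (F_diff _ _ theta_neq0)).
rewrite gvE !blk_vec_normalize (blk_vec_sgd Hsgd).
rewrite (blk_sqnorm_sgd F_diff Hscale Hsgd) //; split.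
  have -> : projS w - (eta_w t / G) *: (Num.sqrt G *: g)
            = (Num.sqrt G)^-1 *: (w - eta_w t *: g).
    rewrite /projS -/G scalerBr !scalerA.
    by congr (_ - _ *: _); rewrite -[X in _ / X]sqr_sqrtG; field; rewrite gt_eqF.
  by rewrite projSZ // invr_gt0.
by rewrite -/g -/G sqnormZ sqr_sqrtG; field; rewrite gt_eqF.
Qed.
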